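(* Let $q\ge 2$, let $(R_i)_{i\ge1}$ be reals with $R_i\to\infty$, and let $n_i\to\infty$. For every $i$ let $\mathcal C_i$ be an ID code for $\Pi^q_{n_i}$ with $M_i\ge 2^{R_i n_i^{q-1}}$ messages and type-I and type-II error probabilities $\lambda_{1,i},\lambda_{2,i}$. Then $\liminf_{i\to\infty}(\lambda_{1,i}+\lambda_{2,i})\ge 1$.
   Context: Fix an integer $q\ge 2$ and let $\mathcal A_q=\{1,\dots,q\}$. For $n\ge 1$, $S_n$ is the symmetric group on $\{1,\dots,n\}$, and for $\mathbf x\in\mathcal A_q^n$, $\sigma\in S_n$, we write $\sigma\mathbf x=(x_{\sigma^{-1}(1)},\dots,x_{\sigma^{-1}(n)})$. The $n$-block $q$-ary uniform permutation channel $\Pi^q_n$ has input and output alphabet $\mathcal A_q^n$ and transition probabilities $\Pi^q_n(\mathbf y\mid\mathbf x)=\frac{1}{n!}\sum_{\sigma\in S_n}\mathbf 1\{\mathbf y=\sigma\mathbf x\}$; $\Pi^q$ denotes the family $(\Pi^q_n)_{n\ge1}$. An ID code (with deterministic decoders) with $M$ messages for $\Pi^q_n$ (an ''$(n,M,\lambda_1,\lambda_2)$ ID code'') is a family $\{(Q_i,\mathcal D_i)\}_{i=1}^M$ where each $Q_i$ is a probability distribution on $\mathcal A_q^n$ (the stochastic encoder of message $i$) and $\mathcal D_i\subseteq\mathcal A_q^n$ (the acceptance region of message $i$). Its error probabilities are $\lambda_{i\to j}=\sum_{\mathbf x}Q_i(\mathbf x)\sum_{\mathbf y\in\mathcal D_j}\Pi^q_n(\mathbf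 y\mid\mathbf x)$ for $i\ne j$ and $\lambda_{i\not\to i}=\sum_{\mathbf x}Q_i(\mathbf x)\sum_{\mathbf y\notin\mathcal D_i}\Pi^q_n(\mathbf y\mid\mathbf x)$; the type-I error probability is $\lambda_1=\max_i\lambda_{i\not\to i}$ and the type-II error probability is $\lambda_2=\max_{i\ne j}\lambda_{i\to j}$. *)

From HB Require Import structures.
From mathcomp Require Import all_boot all_order all_algebra all_fingroup.
From mathcomp Require Import all_classical all_reals all_analysis.
Set Implicit Arguments. Unset Strict Implicit. Unset Printing Implicit Defensive.
Import Order.TTheory GRing.Theory Num.Theory.
Local Open Scope ring_scope.

(* Alphabet A_q = {1,...,q} is represented by 'I_q = {0,...,q-1}. *)
Definition word (q n : nat) := {ffun 'I_n -> 'I_q}.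

Definition permw (q n : nat) (s : 'S_n) (x : word q n) : word q n :=
  [ffun j => x ((s^-1)%g j)].

Definition chan (R : realType) (q n : nat) (y x : word q n) : R :=
  (#|[set s : 'S_n | y == permw s x]|)%:R / (n`!)%:R.

Record IDcode (R : realType) (q n : nat) := {
  idM : nat;
  idQ : 'I_idM -> {ffun word q n -> R};
  idD : 'I_idM -> {set word q n};
  idQ_ge0 : forall i x, 0 <= idQ i x;
  idQ_sum1 : forall i, \sum_(x : word q n) idQ i x = 1 }.

Arguments idM {R q n} _.
Arguments idQ {R q n} _ _.
Arguments idD {R q n} _ _.

Section Errors.
Variables (R : realType) (q n : nat) (C : IDcode R q n).

Definition err_to (i j : 'I_(idM C)) : R :=
  \sum_(x : word q n) idQ C i x * \sum_(y in idD C j) chan R y x.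

Definition err_not (i : 'I_(idM C)) : R :=
  \sum_(x : word q n) idQ C i x * \sum_(y in ~: idD C i) chan R y x.

Definition lambda1 : R := \big[Num.max/0]_(i < idM C) err_not i.

(* type-II error: max_{i <> j} lambda_{i -> j} (0 if there is no such pair) *)
Definition lambda2 : R :=
  \big[Num.max/0]_(i < idM C) \big[Num.max/0]_(j < idM C | j != i) err_to i j.
End Errors.

From HB Require Import structures.
From mathcomp Require Import all_boot all_order all_algebra all_fingroup.
From mathcomp Require Import all_classical all_reals all_analysis.
From mathcomp Require Import ring lra zify.
Set Implicit Arguments. Unset Strict Implicit. Unset Printing Implicit Defensive.
Import Order.TTheory GRing.Theory Num.Theory.
Local Open Scope ring_scope.

(* The permutation channel only sees the type (letter counts) of its input,
   and a word of length n over q letters has at most K = (n+1)^(q-1) types.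
   Pushing each encoder forward to a distribution on types, two messages whose
   pushforwards differ by at most d at every type have acceptance
   probabilities differing by at most K d, which forces lambda1 + lambda2 >=
   1 - K d.  So if lambda1 + lambda2 < 1 - 2/N, the pushforwards are pairwise
   2/(K N)-separated; quantizing their cumulative distribution functions at
   resolution 1/(K N) then maps the messages injectively into nondecreasing
   sequences, of which there are at most 2^(K + 1 + K N) = 2^(O(N n^(q-1))).
   This contradicts M >= 2^(R n^(q-1)) as soon as R is large. *)

Lemma sum_count_mem_ord q (s : seq 'I_q) :
  (\sum_(a < q) count_mem a s = size s)%N.
Proof.
elim: s => [|x s IH] /=; first by rewrite big1.
rewrite big_split /= IH -add1n; congr (_ + _)%N.
by rewrite (bigD1 x) //= eqxx big1 // => a /negbTE; rewrite eq_sym => ->.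
Qed.

Lemma bin_leq_exp2 n m : ('C(n, m) <= 2 ^ n)%N.
Proof.
elim: n m => [|n IH] [|m] //=; first by rewrite bin0 expn_gt0.
by rewrite binS expnS mul2n -addnn leq_add.
Qed.

Lemma truncn_eq_dist_lt1 (R : archiRealFieldType) (x y : R) :
  0 <= x -> 0 <= y -> Num.truncn x = Num.truncn y -> `|x - y| < 1.
Proof.
move=> x_ge0 y_ge0 xy_trunc.
have /andP [x_lb x_ub] := truncn_itv x_ge0.
have /andP [y_lb y_ub] := truncn_itv y_ge0.
move: x_lb x_ub y_lb y_ub; rewrite xy_trunc -!natr1.
by set k := (Num.truncn y)%:R => *; rewrite ltr_norml; apply/andP; split; lra.
Qed.

Section Channel.
Variables (R : realType) (q n : nat).

Lemma permwM (s u : 'S_n) (x : word q n) :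
  permw u (permw s x) = permw (s * u) x.
Proof. by apply/ffunP => j; rewrite !ffunE invMg permM. Qed.

Lemma chan_permw (s : 'S_n) (x y : word q n) :
  chan R y (permw s x) = chan R y x.
Proof.
rewrite /chan; congr (_%:R / _).
have -> : [set u : 'S_n | y == permw u x]
        = [set (s * u)%g | u in [set u | y == permw u (permw s x)]].
  apply/setP => u; rewrite inE; apply/idP/imsetP => [y_ux|[v + ->]].
    by exists (s^-1 * u)%g; rewrite ?inE ?permwM mulKVg.
  by rewrite inE permwM.
by rewrite card_imset //; apply: mulgI.
Qed.

Lemma chan_ge0 (x y : word q n) : 0 <= chan R y x.
Proof. by rewrite /chan divr_ge0 ?ler0n. Qed.

Lemma chan_sum1 (x : word q n) : \sum_y chan R y x = 1.
Proof.
rewrite /chan -mulr_suml -natr_sum.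
have -> : (\sum_y #|[set s : 'S_n | y == permw s x]| = n`!)%N.
  rewrite -card_Sn -sum1_card (partition_big (fun s => permw s x) predT) //=.
  apply: eq_bigr => y _; rewrite sum1_card; apply: eq_card => s.
  by rewrite !inE eq_sym.
by rewrite mulfV // pnatr_eq0 -lt0n fact_gt0.
Qed.

Definition letters (x : word q n) : n.-tuple 'I_q := [tuple x j | j < n].

Lemma perm_eq_letters_permw (x x' : word q n) :
  perm_eq (letters x) (letters x') -> exists s : 'S_n, x' = permw s x.
Proof.
rewrite perm_sym => /tuple_permP [s x'_s]; exists s^-1%g.
apply/ffunP => j; rewrite ffunE invgK.
have := congr1 (fun t => nth (x j) t j) x'_s.
by rewrite -!(tnth_nth (x j)) !tnth_mktuple.
Qed.

Lemma chan_perm_eq_letters (x x' y : word q n) :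
  perm_eq (letters x) (letters x') -> chan R y x' = chan R y x.
Proof. by case/perm_eq_letters_permw => s ->; rewrite chan_permw. Qed.

End Channel.

(* Only the counts of the first q - 1 = p letters are recorded: the last one
   is n minus their sum, and this keeps the number of types at (n+1)^p. *)
Definition word_type p n (x : word p.+1 n) : {ffun 'I_p -> 'I_n.+1} :=
  [ffun a => inord (count_mem (widen_ord (leqnSn p) a) (letters x))].

Lemma word_type_perm_eq p n (x x' : word p.+1 n) :
  word_type x = word_type x' -> perm_eq (letters x) (letters x').
Proof.
move=> xx'_type.
have count_lt (z : word p.+1 n) b : (count_mem b (letters z) < n.+1)%N.
  by rewrite ltnS (leq_trans (count_size _ _)) ?size_tuple.
have count_widen b : count_mem (widen_ord (leqnSn p) b) (letters x)
                   = count_mem (widen_ord (leqnSn p) b) (letters x').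
  have := congr1 (fun f : {ffun 'I_p -> 'I_n.+1} => val (f b)) xx'_type.
  by rewrite /= !ffunE /= !inordK ?count_lt.
have count_total (z : word p.+1 n) :
    (\sum_(b < p) count_mem (widen_ord (leqnSn p) b) (letters z)
     + count_mem ord_max (letters z))%N = n.
  rewrite -(big_ord_recr p (fun a => count_mem a (letters z))).
  by rewrite sum_count_mem_ord size_tuple.
have count_max : count_mem ord_max (letters x) = count_mem ord_max (letters x').
  apply: (@addnI (\sum_(b < p) count_mem (widen_ord (leqnSn p) b) (letters x))).
  by rewrite count_total (eq_bigr _ (fun b _ => count_widen b)) count_total.
apply/allP => a _; apply/eqP; case: (unliftP ord_max a) => [b ->|->] //.
by have -> : lift ord_max b = widen_ord (leqnSn p) b by apply/val_inj/lift_max.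
Qed.

Lemma chan_word_type (R : realType) p n (x x' y : word p.+1 n) :
  word_type x = word_type x' -> chan R y x = chan R y x'.
Proof. by move/word_type_perm_eq/chan_perm_eq_letters. Qed.

Lemma sum_mulB_le_fibres (R : realType) (X T : finType) (P Q g : X -> R)
    (tau : X -> T) (d : R) :
  (forall x, 0 <= g x <= 1) ->
  (forall x x', tau x = tau x' -> g x = g x') ->
  (forall t, `|\sum_(x | tau x == t) P x - \sum_(x | tau x == t) Q x| <= d) ->
  \sum_x P x * g x - \sum_x Q x * g x <= #|T|%:R * d.
Proof.
move=> g01 g_tau PQ_fibre.
rewrite -sumrB (partition_big tau predT) //= mulr_natl -sumr_const.
apply: ler_sum => t _.
have [x0 /eqP x0_t|fibre0] := pickP (fun x => tau x == t); last first.
  rewrite big_pred0 => [|x]; last by rewrite fibre0.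
  exact: le_trans (PQ_fibre t).
have -> : \sum_(x | true && (tau x == t)) (P x * g x - Q x * g x)
        = g x0 * (\sum_(x | tau x == t) P x - \sum_(x | tau x == t) Q x).
  rewrite mulrBr !mulr_sumr -sumrB; apply: eq_bigr => x /eqP x_t.
  by rewrite (g_tau x x0) ?x0_t // ![g x0 * _]mulrC.
have /andP [g0 g1] := g01 x0.
rewrite (le_trans (ler_norm _)) // normrM -[d]mul1r.
by rewrite ler_pM // ger0_norm.
Qed.

Section CdfQuantization.
Variables (R : realType) (I T : finType) (L : nat) (p : I -> T -> R).
Hypothesis L_gt0 : (0 < L)%N.
Hypothesis p_ge0 : forall i t, 0 <= p i t.
Hypothesis p_sum1 : forall i, \sum_t p i t = 1.

Definition cdf i (k : nat) := \sum_(t | (enum_rank t < k)%N) p i t.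

Lemma cdf_ge0 i k : 0 <= cdf i k.
Proof. exact: sumr_ge0. Qed.

Lemma cdf_le1 i k : cdf i k <= 1.
Proof.
rewrite -(p_sum1 i) /cdf [X in _ <= X](bigID (fun t => (enum_rank t < k)%N)).
by rewrite lerDl sumr_ge0.
Qed.

Lemma cdf_leS i k : cdf i k <= cdf i k.+1.
Proof.
rewrite /cdf [X in _ <= X](bigID (fun t => (enum_rank t < k)%N)) /=.
rewrite [X in _ <= X + _](eq_bigl (fun t => (enum_rank t < k)%N)) => [|t].
  by rewrite lerDl sumr_ge0.
by case: (ltnP (enum_rank t) k) => lt_tk; rewrite ?andbT ?andbF // ltnW.
Qed.

Lemma p_cdfE i t : p i t = cdf i (enum_rank t).+1 - cdf i (enum_rank t).
Proof.
rewrite /cdf (bigD1 t) //= ?ltnSn //.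
rewrite (eq_bigl (fun t' => (enum_rank t' < enum_rank t)%N)) ?addrK // => t'.
rewrite ltnS leq_eqVlt; case: (eqVneq t' t) => [->|t't]; first by rewrite ltnn eqxx andbF.
by rewrite (inj_eq val_inj) (inj_eq enum_rank_inj) (negbTE t't) andbT.
Qed.

Definition cdf_code i : (#|T|.+1).-tuple 'I_L.+1 :=
  [tuple inord (Num.truncn (L%:R * cdf i k)) | k < #|T|.+1].

Lemma truncn_cdf_le i k : (Num.truncn (L%:R * cdf i k) <= L)%N.
Proof.
rewrite truncn_le_nat (@le_lt_trans _ _ L%:R) ?ltr_nat //.
by rewrite -[leRHS]mulr1 ler_wpM2l ?ler0n ?cdf_le1.
Qed.

Lemma val_cdf_code i :
  map val (cdf_code i)
  = [seq Num.truncn (L%:R * cdf i k) | k <- iota 0 #|T|.+1].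
Proof.
rewrite -val_enum_ord -!map_comp; apply: eq_map => k /=.
by rewrite inordK // ltnS truncn_cdf_le.
Qed.

Lemma cdf_code_sorted i : sorted leq (map val (cdf_code i)).
Proof.
rewrite val_cdf_code; apply/(sortedP 0%N) => k.
rewrite size_map size_iota => k_lt; have k_lt' := ltnW k_lt.
rewrite !(nth_map 0%N) ?size_iota // !nth_iota //.
by apply: le_truncn; rewrite ler_wpM2l ?ler0n // add0n cdf_leS.
Qed.

Lemma cdf_code_eq_dist i j :
  cdf_code i = cdf_code j -> forall t, `|p i t - p j t| <= 2 / L%:R.
Proof.
move=> ij_code t.
have cdf_dist k : (k < #|T|.+1)%N -> `|cdf i k - cdf j k| < 1 / L%:R.
  move=> k_lt; have := congr1 (fun c : (#|T|.+1).-tuple _ => nth 0%N (map val c) k) ij_code.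
  rewrite /= !val_cdf_code !(nth_map 0%N) ?size_iota // !nth_iota // add0n.
  move/(truncn_eq_dist_lt1 (mulr_ge0 (ler0n R L) (cdf_ge0 i k))
                           (mulr_ge0 (ler0n R L) (cdf_ge0 j k))).
  by rewrite -mulrBr normrM ger0_norm // ltr_pdivlMr ?ltr0n // mulrC.
rewrite !p_cdfE; set a := cdf i _; set b := cdf i _; set c := cdf j _; set d := cdf j _.
have -> : a - b - (c - d) = (a - c) - (b - d) by lra.
rewrite (le_trans (ler_normB _ _)) // -[2]/(1 + 1) mulrDl.
by rewrite ltW // ltrD ?cdf_dist // ltnS // ltnW.
Qed.

Lemma card_le_separated :
  (forall i j, i != j -> exists t, 2 / L%:R < `|p i t - p j t|) ->
  (#|I| <= 2 ^ (#|T|.+1 + L))%N.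
Proof.
move=> separated.
have code_inj : injective cdf_code.
  move=> i j ij_code; apply/eqP/negPn/negP => /separated [t].
  by rewrite ltNge cdf_code_eq_dist.
rewrite -(card_imset _ code_inj) (leq_trans _ (bin_leq_exp2 _ #|T|.+1)) //.
rewrite -card_sorted_tuples fintype.subset_leq_card //.
by apply/fintype.subsetP => _ /imsetP [i _ ->]; rewrite inE cdf_code_sorted.
Qed.

End CdfQuantization.

Section IDcodeErrors.
Variables (R : realType) (q n : nat) (C : IDcode R q n).

Definition accept (j : 'I_(idM C)) (x : word q n) : R :=
  \sum_(y in idD C j) chan R y x.

Lemma accept_ge0_le1 j x : 0 <= accept j x <= 1.
Proof.
rewrite sumr_ge0 /= => [|y _]; last exact: chan_ge0.
rewrite -(chan_sum1 R x) [leRHS](bigID (mem (idD C j))) /= lerDl.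
by rewrite sumr_ge0 // => y _; apply: chan_ge0.
Qed.

Lemma err_notE (i : 'I_(idM C)) : err_not i = 1 - \sum_x idQ C i x * accept i x.
Proof.
rewrite /err_not -(idQ_sum1 i) -sumrB; apply: eq_bigr => x _.
rewrite -[X in X - _]mulr1 -mulrBr; congr (_ * _).
rewrite -(chan_sum1 R x) [in RHS](bigID (mem (idD C i))) /= addrC addrK.
by apply: eq_bigl => y; rewrite inE.
Qed.

Lemma err_not_le_lambda1 (i : 'I_(idM C)) : err_not i <= lambda1 C.
Proof. exact: (le_bigmax _ (fun i => err_not i)). Qed.

Lemma err_to_le_lambda2 (i j : 'I_(idM C)) : i != j -> err_to i j <= lambda2 C.
Proof.
move=> ij; apply: le_trans (le_bigmax _ _ i).
by apply: (le_bigmax_cond _ (err_to i)); rewrite eq_sym.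
Qed.

End IDcodeErrors.

Section TypeDistribution.
Variables (R : realType) (p n : nat) (C : IDcode R p.+1 n).

Definition type_mass i (t : {ffun 'I_p -> 'I_n.+1}) : R :=
  \sum_(x | word_type x == t) idQ C i x.

Lemma type_mass_close_errors_ge i j (d : R) :
  (forall t, `|type_mass i t - type_mass j t| <= d) ->
  1 - (n.+1 ^ p)%N%:R * d <= err_not i + err_to j i.
Proof.
move=> ij_close.
have accept_word_type x x' : word_type x = word_type x' -> accept i x = accept i x'.
  by move=> xx'_type; apply: eq_bigr => y _; apply: chan_word_type.
have := sum_mulB_le_fibres (accept_ge0_le1 i) accept_word_type ij_close.
have -> : err_to j i = \sum_x idQ C j x * accept i x by [].
rewrite card_ffun !card_ord err_notE; lra.
Qed.

Lemma idcode_card_le (N : nat) :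
  (0 < N)%N -> lambda1 C + lambda2 C < 1 - 2 / N%:R ->
  (idM C <= 2 ^ ((n.+1 ^ p).+1 + n.+1 ^ p * N))%N.
Proof.
move=> N_gt0 small_errors.
set K := (n.+1 ^ p)%N.
have K_gt0 : (0 < K)%N by rewrite expn_gt0.
have card_types : #|{ffun 'I_p -> 'I_n.+1}| = K by rewrite card_ffun !card_ord.
have := card_le_separated (L := K * N) (p := type_mass).
rewrite card_types card_ord; apply=> [|i t|i|i j ij].
- by rewrite muln_gt0 K_gt0.
- by apply: sumr_ge0 => x _; apply: idQ_ge0.
- by rewrite -(idQ_sum1 i) [RHS](partition_big (@word_type p n) predT).
have [t|close] := pickP (fun t => 2 / (K * N)%:R < `|type_mass i t - type_mass j t|).
  by exists t.
have {}close t : `|type_mass i t - type_mass j t| <= 2 / (K * N)%:R.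
  by rewrite leNgt close.
have := type_mass_close_errors_ge close.
have -> : K%:R * (2 / (K * N)%:R) = 2 / N%:R :> R.
  by rewrite natrM; field; rewrite !pnatr_eq0 -!lt0n K_gt0 N_gt0.
have := err_not_le_lambda1 i.
have := err_to_le_lambda2 (i := j) (j := i); rewrite eq_sym ij => /(_ isT).
lra.
Qed.

Lemma idcode_card_le_pow2 (N : nat) :
  (0 < n)%N -> (0 < N)%N -> lambda1 C + lambda2 C < 1 - 2 / N%:R ->
  (idM C <= 2 ^ ((N + 2) * 2 ^ p * n ^ p))%N.
Proof.
move=> n_gt0 N_gt0 /(idcode_card_le N_gt0) /leq_trans; apply.
rewrite leq_exp2l //.
have : (n.+1 ^ p <= 2 ^ p * n ^ p)%N.
  rewrite -expnMn; have [->|p_gt0] := posnP p; first by rewrite !expn0.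
  by rewrite leq_exp2r // mul2n -addnn -addn1 leq_add2l.
nia.
Qed.

End TypeDistribution.

Local Open Scope classical_set_scope.
Local Open Scope ring_scope.

Theorem theorem1 (R : realType) (q : nat) (Rs : nat -> R) (n : nat -> nat)
    (C : forall i : nat, IDcode R q (n i)) :
  (2 <= q)%N ->
  Rs @ \oo --> +oo ->
  (forall N : nat, exists i0 : nat, forall i, (i0 <= i)%N -> (N <= n i)%N) ->
  (forall i, (2:R) `^ (Rs i * (n i)%:R ^+ q.-1) <= (idM (C i))%:R) ->
  (* liminf_i (lambda1_i + lambda2_i) >= 1 *)
  forall eps : R, 0 < eps ->
    exists i0 : nat, forall i, (i0 <= i)%N ->
      1 - eps <= lambda1 (C i) + lambda2 (C i).
Proof.
case: q C => [//|p] C _ Rs_oo n_oo many_messages eps eps_gt0.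
set N := (Num.truncn (2 / eps)).+1.
have N_eps : 2 / N%:R < eps.
  by rewrite ltr_pdivrMr ?ltr0n // mulrC -ltr_pdivrMr //; apply: truncnS_gt.
set B := ((N + 2) * 2 ^ p)%N.
have [i1 _ Rs_large] := (cvgryPgt Rs).1 Rs_oo (B.+1)%:R.
have [i2 n_pos] := n_oo 1%N.
exists (maxn i1 i2) => i; rewrite geq_max => /andP [/Rs_large Rs_i /n_pos n_i].
rewrite leNgt; apply/negP => small_errors.
have eps_N : 1 - eps <= 1 - 2 / N%:R by lra.
have := idcode_card_le_pow2 n_i (isT : (0 < N)%N) (lt_le_trans small_errors eps_N).
set E := ((N + 2) * 2 ^ p * n i ^ p)%N => few_messages.
have E_lt : (E.+1)%:R <= Rs i * (n i)%:R ^+ p.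
  apply: (@le_trans _ _ ((B.+1)%:R * (n i)%:R ^+ p)).
    by rewrite -natrX -natrM ler_nat /E /B; have := expn_gt0 (n i) p; rewrite n_i; nia.
  by rewrite ler_wpM2r ?exprn_ge0 ?ler0n // ltW.
have : (2 ^ E.+1 <= idM (C i))%N.
  rewrite -(ler_nat R) natrX -powR_mulrn ?ler0n //.
  by apply: le_trans (many_messages i); apply: ler_powR; rewrite ?ler1n.
by move/leq_trans/(_ few_messages); rewrite leq_exp2l // ltnn.
Qed.
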